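(* Let $M,N\ge0$ be integers and let $\phi\in\mathcal{D}_N^M$. If $\{\phi(x-a):\ a\in I_p\}$ is an orthonormal system in $L^2(\mathbb{Q}_p)$, then $$\sum_{l=0}^{p^{M+N}-1}\Big|\widehat\phi\Big(\frac{l}{p^M}\Big)\Big|^2\chi_p\Big(\frac{lk}{p^{M+N}}\Big)=p^N\delta_{k0},\qquad k=0,1,\dots,p^N-1,$$ where $\delta_{k0}$ is the Kronecker delta.
   Context: $p$ is a prime, $\mathbb{Q}_p$ the field of $p$-adic numbers with norm $|\cdot|_p$. The fractional part of $x=p^{\gamma}\sum_{j\ge0}x_jp^j$ ($x_j\in\{0,\dots,p-1\}$, $x_0\ne0$) is $\{x\}_p=p^{\gamma}\sum_{j=0}^{-\gamma-1}x_jp^j$, $\{0\}_p=0$; $\chi_p(x)=e^{2\pi i\{x\}_p}$; $I_p=\{a\in\mathbb{Q}_p:\{a\}_p=a\}$; $B_\gamma(a)=\{x:|x-a|_p\le p^\gamma\}$. $dx$ is Haar measure with $B_0(0)$ of measure $1$; $\widehat f(\xi)=\int\chi_p(\xi x)f(x)\,dx$. A test function is a locally constant compactly supported complex function. $\mathcal{D}_N^M$ is the set of test functions $\phi$ that are $p^M$-periodic ($\phi(x+p^M)=\phi(x)$) and supported in $B_N(0)$; equivalently, locally constant $\phi$ with $\operatorname{supp}\phi\subset B_N(0)$, $\operatorname{supp}\widehat\phi\subset B_M(0)$. *)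

From HB Require Import structures.
From mathcomp Require Import all_boot all_order all_algebra.
From mathcomp Require Import all_classical all_reals all_analysis.
From mathcomp Require Import complex Rstruct.
Set Implicit Arguments. Unset Strict Implicit. Unset Printing Implicit Defensive.
Import Order.TTheory GRing.Theory Num.Theory.
Local Open Scope ring_scope.

Notation R := Rdefinitions.R.
Notation C := (complex R).

Section Padic.
Variable p : nat.

(* x = sum_{j in Z} d_j p^j, digits 0 <= d_j <= p-1, only finitely many
   nonzero digits with negative index *)
Definition digitsP (d : int -> nat) : Prop :=
  (forall j, (d j <= p.-1)%N) /\
  exists K : nat, forall j : int, j < - (K%:Z) -> d j = 0%N.

Definition Qp := {d : int -> nat | digitsP d}.

Definition dig (x : Qp) : int -> nat := proj1_sig x.

Lemma digitsP0 : digitsP (fun _ => 0%N).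
Proof. by split => // ; exists 0%N. Qed.

(* build a p-adic number from a digit function (meaningful only when the
   digit function is admissible, which is the case for all uses below) *)
Definition mkQp (d : int -> nat) : Qp :=
  match pselect (digitsP d) with
  | left h => exist _ d h
  | right _ => exist _ (fun _ => 0%N) digitsP0
  end.

Definition bndK (x : Qp) : nat := projT1 (cid (proj2 (proj2_sig x))).

(* truncation  tr x n = sum_{j < n} x_j p^j  (a rational number) *)
Definition trunc (x : Qp) (n : int) : rat :=
  let K := bndK x in
  \sum_(i < `|Num.max (0 : int) (n + K%:Z)%R|%N)
     ((dig x (i%:Z - K%:Z))%:R * (p%:Q) ^ (i%:Z - K%:Z)).

Definition digof (S : rat) (j : int) : nat :=
  `|(Num.floor (S / (p%:Q) ^ j) %% (p%:Z))%Z|%N.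

Definition addQp (x y : Qp) : Qp :=
  mkQp (fun j => digof (trunc x (j + 1) + trunc y (j + 1)) j).
Definition oppQp (x : Qp) : Qp :=
  mkQp (fun j => digof ((p%:Q) ^ (j + 1) - trunc x (j + 1)) j).
Definition subQp (x y : Qp) : Qp := addQp x (oppQp y).
Definition mulQp (x y : Qp) : Qp :=
  let K := (bndK x + bndK y)%N in
  mkQp (fun j => digof (trunc x (j + 1 + K%:Z) * trunc y (j + 1 + K%:Z)) j).

Definition natQp (k : nat) : Qp :=
  mkQp (fun j => if 0 <= j then ((k %/ p ^ `|j|%N) %% p)%N else 0%N).
Definition pinvQp (n : nat) : Qp := mkQp (fun j => nat_of_bool (j == - (n%:Z))).
Definition zeroQp : Qp := natQp 0.

(* closed ball B_g(a) = { x : |x - a|_p <= p^g }, i.e. all digits of x - a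
   of index < -g vanish *)
Definition inBall (g : int) (a x : Qp) : Prop :=
  forall j : int, j < - g -> dig (subQp x a) j = 0%N.

Definition fracQp (x : Qp) : Qp := mkQp (fun j => if j < 0 then dig x j else 0%N).
Definition fracval (x : Qp) : rat := trunc x 0.

Definition Ip : set Qp := [set a | fracQp a = a].

Definition chi (x : Qp) : C :=
  let t : R := ratr (fracval x) in
  Complex (cos (2 * pi * t)) (sin (2 * pi * t)).

Definition locconst (f : Qp -> C) : Prop :=
  forall x, exists m : int, forall y, inBall m x y -> f y = f x.
Definition compsupp (f : Qp -> C) : Prop :=
  exists n : int, forall x, f x != 0 -> inBall n zeroQp x.
Definition testfun (f : Qp -> C) : Prop := locconst f /\ compsupp f.

Definition DNM (N M : nat) (phi : Qp -> C) : Prop :=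
  [/\ testfun phi,
      (forall x, phi (addQp x (natQp (p ^ M))) = phi x) &
      (forall x, phi x != 0 -> inBall N%:Z zeroQp x)].

(* Haar integral (dx, with B_0(0) of measure 1) of a test function f:
   if f is supported in B_n(0) and constant on the cosets of B_{-m}(0),
   int f = p^{-m} * sum over representatives k p^{-n}, 0 <= k < p^{n+m},
   of p^{-n}Z_p / p^m Z_p.  (Set to 0 on non-test functions; it is only
   applied to test functions below.) *)
Definition adapted (f : Qp -> C) (mn : nat * nat) : Prop :=
  (forall x, f x != 0 -> inBall mn.2%:Z zeroQp x) /\
  (forall x y, inBall (- mn.1%:Z) zeroQp y -> f (addQp x y) = f x).

Definition integral (f : Qp -> C) : C :=
  match pselect (exists mn, adapted f mn) with
  | left h => let mn := projT1 (cid h) in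
      ((p%:R)^-1) ^+ mn.1 *
      \sum_(k < (p ^ (mn.2 + mn.1))%N) f (mulQp (natQp k) (pinvQp mn.2))
  | right _ => 0
  end.

Definition inner (f g : Qp -> C) : C := integral (fun x => f x * (g x)^*).
Definition fourier (f : Qp -> C) (xi : Qp) : C :=
  integral (fun x => chi (mulQp xi x) * f x).

Definition translate (a : Qp) (phi : Qp -> C) : Qp -> C :=
  fun x => phi (subQp x a).

Definition orthonormal_translates (phi : Qp -> C) : Prop :=
  forall a b, Ip a -> Ip b ->
    (a = b -> inner (translate a phi) (translate b phi) = 1) /\
    (a <> b -> inner (translate a phi) (translate b phi) = 0).

End Padic.

From Pilot Require Import Defs.
From HB Require Import structures.
From mathcomp Require Import all_boot all_order all_algebra.
From mathcomp Require Import all_classical all_reals all_analysis.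
From mathcomp Require Import complex Rstruct.
From mathcomp Require Import zify ring lra.
Import Order.TTheory GRing.Theory Num.Theory.
Local Open Scope ring_scope.
Set Implicit Arguments. Unset Strict Implicit. Unset Printing Implicit Defensive.
(* A function phi in D_N^M is constant on the cosets of p^M Z_p and vanishes
   outside B_N(0), so it is determined by its values c_j = phi(j p^-N),
   0 <= j < p^(M+N), and every Haar integral below is a finite Riemann sum over
   the grid p^-N Z / p^M Z.  Hence phi^(l p^-M) = p^-M sum_j e(l j / p^(M+N)) c_j,
   and with e(t) = exp(2 pi i t)
     |phi^(l p^-M)|^2 chi(l k / p^(M+N))
       = p^-2M sum_(j, j') c_j conj(c_j') e(l (j - j' + k) / p^(M+N)).
   Summing over l kills every term with j' <> j + k (mod p^(M+N)), leaving
   p^N * p^-M sum_j c_j conj(c_(j+k)).  That is p^N times the inner product of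
   the translates of phi by k p^-N and by 0, two points of I_p, which
   orthonormality evaluates to the Kronecker delta.

   In the digit model of Q_p all computations are transported to rationals:
   x has the rational value s when each truncation sum_(j<n) x_j p^j agrees
   with s modulo p^n Z. *)

Local Notation int_num := Num.Def.int_num.
Local Notation floor := Num.floor.

(** * The exponential e(t) = exp(2 pi i t) *)

Definition cexp2pi (t : R) : C := Complex (cos (2 * pi * t)) (sin (2 * pi * t)).

Lemma cexp2piD s t : cexp2pi (s + t) = cexp2pi s * cexp2pi t.
Proof.
rewrite /cexp2pi mulrDr trigo.cosD trigo.sinD.
by apply/eqP; rewrite eq_complex /= !eqxx andTb; apply/eqP; ring.
Qed.

Lemma cexp2pi0 : cexp2pi 0 = 1.
Proof. rewrite /cexp2pi mulr0 trigo.cos0 trigo.sin0 complexr0. exact: rmorph1. Qed.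

Lemma cexp2piDn t (n : nat) : cexp2pi (t + n%:R) = cexp2pi t.
Proof.
rewrite /cexp2pi.
have e : 2 * pi * (t + n%:R) = 2 * pi * t + pi *+ 2 *+ n :> R.
  rewrite -mulrnA -[pi *+ (2 * n)%N]mulr_natr natrM; ring.
rewrite e (periodicn (@cosD2pi R)) (periodicn (@sinD2pi R)); reflexivity.
Qed.

Lemma cexp2piDz t (z : int) : cexp2pi (t + z%:~R) = cexp2pi t.
Proof.
case: z => n; first exact: cexp2piDn.
rewrite NegzE mulrNz.
by rewrite -[in RHS](subrK (n.+1%:~R) t) -[in RHS]pmulrn cexp2piDn.
Qed.

Lemma conj_cexp2pi t : (cexp2pi t)^* = cexp2pi (- t).
Proof.
rewrite /cexp2pi mulrN trigo.cosN trigo.sinN.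
by apply/eqP; rewrite eq_complex /= !eqxx.
Qed.

Lemma cexp2piMn t (n : nat) : cexp2pi (n%:R * t) = cexp2pi t ^+ n.
Proof.
elim: n => [|n IH]; first by rewrite mul0r cexp2pi0 expr0.
by rewrite -natr1 mulrDl mul1r cexp2piD IH exprSr.
Qed.

Lemma cexp2pi_neq1 r : 0 < r < 1 -> cexp2pi r != 1.
Proof.
move=> /andP [r0 r1]; apply/negP => /eqP h.
have hc : cos (2 * pi * r) = 1 by move: h => /(congr1 (@complex.Re R)).
have hpi := pi_gt0 R.
have cinj := @cos_inj R.
case: (lerP (2 * pi * r) pi) => hth.
  have := cinj (2 * pi * r) 0; rewrite trigo.cos0 hc => /(_ _ _ erefl).
  rewrite !in_itv /= lexx hth => h2.
  have : 2 * pi * r = 0 by apply: h2; apply/andP; split => //; nra.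
  nra.
have := cinj (2 * pi - 2 * pi * r) 0.
have -> : cos (2 * pi - 2 * pi * r) = 1.
  have e : 2 * pi - 2 * pi * r = - (2 * pi * r) + pi *+ 2 *+ 1.
    by rewrite mulr1n -[pi *+ 2]mulr_natr; ring.
  by rewrite e (periodicn (@cosD2pi R)) trigo.cosN.
rewrite trigo.cos0 => /(_ _ _ erefl); rewrite !in_itv /= lexx => h2.
have : 2 * pi - 2 * pi * r = 0 by apply: h2; apply/andP; split; nra.
nra.
Qed.

Lemma cexp2pi_ratr_int (q : rat) : q \is a int_num -> cexp2pi (ratr q) = 1.
Proof.
move=> /intrP [z ->]; rewrite ratr_int -[z%:~R]add0r cexp2piDz; exact: cexp2pi0.
Qed.

Lemma cexp2pi_ratrDint (q z : rat) :
  z \is a int_num -> cexp2pi (ratr (q + z)) = cexp2pi (ratr q).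
Proof.
move=> /intrP [y ->]; rewrite rmorphD /= ratr_int; exact: cexp2piDz.
Qed.

Lemma sum_expr_root1 (F : idomainType) (w : F) n :
  w ^+ n = 1 -> w != 1 -> \sum_(i < n) w ^+ i = 0.
Proof.
move=> wn w_neq1; have := subrX1 w n; rewrite wn subrr => /esym /eqP.
by rewrite mulf_eq0 subr_eq0 (negbTE w_neq1) => /eqP.
Qed.

Lemma cexp2pi_frac_neq1 (n : nat) (m : int) : (0 < n)%N -> ~~ (n%:Z %| m)%Z ->
  cexp2pi (ratr (m%:~R / (n%:R : rat))) != 1.
Proof.
move=> n_gt0 ndvd.
have n_neq0 : (n%:R : rat) != 0 by rewrite pnatr_eq0 -lt0n.
have r_neq0 : (m %% n)%Z != 0 by apply: contra ndvd => /eqP /dvdz_mod0P.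
have r_ge0 : 0 <= (m %% n)%Z by apply: modz_ge0; lia.
have r_lt : (m %% n)%Z < n by apply: ltz_pmod; lia.
rewrite {1}(divz_eq m n) intrD mulrDl addrC cexp2pi_ratrDint; last first.
  by rewrite intrM mulfK // intr_int.
set q := (m %% n)%Z%:~R / (n%:R : rat).
have /andP [q_gt0 q_lt1] : 0 < q < 1.
  apply/andP; split; first by rewrite divr_gt0 ?ltr0n // ltr0z lt_def r_neq0.
  by rewrite ltr_pdivrMr ?ltr0n // mul1r -[n%:R]/((n%:Z)%:~R : rat) ltr_int.
have q_gt0' : (ratr 0 : R) < ratr q by rewrite ltr_rat.
have q_lt1' : ratr q < (ratr 1 : R) by rewrite ltr_rat.
by apply: cexp2pi_neq1; rewrite -(rmorph0 ratr) -(rmorph1 ratr) q_gt0' q_lt1'.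
Qed.

Lemma sum_cexp2pi_frac (n : nat) (m : int) : (0 < n)%N ->
  \sum_(l < n) cexp2pi (ratr ((l%:R : rat) * m%:~R / n%:R)) =
  if (n%:Z %| m)%Z then n%:R else 0.
Proof.
move=> n_gt0; set w := cexp2pi (ratr (m%:~R / (n%:R : rat))).
have n_neq0 : (n%:R : rat) != 0 by rewrite pnatr_eq0 -lt0n.
rewrite (eq_bigr (fun l : 'I_n => w ^+ l)); last first.
  by move=> l _; rewrite -mulrA rmorphM /= ratr_nat cexp2piMn.
case: ifP => dvd.
  have -> : w = 1.
    apply: cexp2pi_ratr_int; rewrite -(divzK dvd) intrM.
    by rewrite -[n%:R]/((n%:Z)%:~R : rat) mulfK // intr_int.
  by rewrite (eq_bigr (fun=> 1)) ?sumr_const ?card_ord // => i _; rewrite expr1n.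
apply: sum_expr_root1; last by rewrite cexp2pi_frac_neq1 ?dvd.
rewrite /w -cexp2piMn -[(n%:R : R)]ratr_nat -rmorphM /= mulrC mulfVK //.
exact/cexp2pi_ratr_int/intr_int.
Qed.

Lemma dvdz_shift_mod (n j j' k : nat) : (j < n)%N -> (j' < n)%N -> (k < n)%N ->
  (n%:Z %| (j%:Z - j'%:Z + k%:Z))%Z = (j' == (j + k) %% n)%N.
Proof.
move=> hj hj' hk.
have hmod : ((j + k) %% n = if (j + k < n)%N then j + k else j + k - n)%N.
  case: ifP => h; first by rewrite modn_small.
  have hle : (n <= j + k)%N by lia.
  by rewrite -{1}(subnK hle) modnDr modn_small //; lia.
rewrite hmod; apply/idP/idP.
  move/dvdzP => [q hq].
  have : q = 0 \/ q = 1 by nia.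
  by case: ifP => h [] hq'; rewrite hq' in hq; apply/eqP; lia.
move=> /eqP ->; apply/dvdzP.
by case: ifP => h; [exists 0 | exists 1]; lia.
Qed.

Lemma modn_shiftK n j k : (j < n)%N -> (k <= n)%N -> (((j + k) %% n + n - k) %% n)%N = j.
Proof.
move=> hj hk; case: (ltnP (j + k) n) => h.
  rewrite (modn_small h) (_ : (j + k + n - k = j + n)%N); last lia.
  by rewrite modnDr modn_small.
have e : ((j + k) %% n = j + k - n)%N.
  by rewrite -{1}(subnK h) modnDr modn_small //; lia.
by rewrite e (_ : (j + k - n + n - k = j)%N) ?modn_small //; lia.
Qed.

Lemma int_ind_from (n0 : int) (Q : int -> Prop) :
  (forall n, n <= n0 -> Q n) -> (forall n, n0 <= n -> Q n -> Q (n + 1)) ->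
  forall n, Q n.
Proof.
move=> hb hs n; case: (lerP n n0) => hn; first exact: hb.
have -> : n = n0 + (`|n - n0|%N)%:Z by lia.
elim: (`|n - n0|%N) => [|k IH]; first by rewrite addr0; apply: hb.
have -> : n0 + k.+1%:Z = (n0 + k%:Z) + 1 by lia.
apply: hs => //; lia.
Qed.

Lemma floor_natr_div (k m : nat) : floor (k%:R / (m%:R : rat)) = (k %/ m)%N%:Z.
Proof.
case: (posnP m) => hm.
  by rewrite hm invr0 mulr0 divn0 floor0.
apply: floor_def; have hm' : 0 < (m%:R : rat) by rewrite ltr0n.
apply/andP; split.
  by rewrite -pmulrn ler_pdivlMr // -natrM ler_nat leq_trunc_div.
rewrite intrD -pmulrn ltr_pdivrMr // natr1 -natrM ltr_nat.
apply: ltn_ceil; exact: hm.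
Qed.

Lemma sum_ord_mul (V : nmodType) (F : nat -> V) a b :
  \sum_(k < a * b) F k = \sum_(i < a) \sum_(r < b) F (i * b + r)%N.
Proof.
elim: a => [|a IH]; first by rewrite mul0n !big_ord0.
rewrite mulSnr big_ord_recr /= -IH big_split_ord /=; congr (_ + _).
all: try by apply: eq_bigr => i _; rewrite addnC.
Qed.

Section PadicArithmetic.
Variable p : nat.
Hypothesis p_gt1 : (1 < p)%N.
Local Notation P := (p%:R : rat).

Lemma P_gt0 : 0 < P. Proof. by rewrite ltr0n; lia. Qed.

Lemma P_neq0 : P != 0. Proof. by rewrite gt_eqF // P_gt0. Qed.

Lemma P_gt1 : 1 < P. Proof. by rewrite ltr1n. Qed.

Lemma PzD a b : P ^ (a + b) = P ^ a * P ^ b.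
Proof. exact: expfzDr P_neq0. Qed.

Lemma Pz_gt0 a : 0 < P ^ a. Proof. exact: exprz_gt0 P_gt0. Qed.

Lemma Pz_neq0 a : P ^ a != 0. Proof. by rewrite gt_eqF // Pz_gt0. Qed.

Lemma Pz_int a : 0 <= a -> P ^ a \is a int_num.
Proof.
case: a => // n _; rewrite -exprnP; apply: rpredX; exact: natr_int.
Qed.

Lemma PzN a : P ^ (- a) = (P ^ a)^-1. Proof. by rewrite invr_expz. Qed.

Lemma PzK a : P ^ a * P ^ (- a) = 1.
Proof. by rewrite -PzD subrr. Qed.

(** * Congruences modulo powers of p *)

Definition pcong (n : int) (a b : rat) := (a - b) * P ^ (- n) \is a int_num.

Lemma pcong_refl n a : pcong n a a.
Proof. by rewrite /pcong subrr mul0r int_num0. Qed.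

Lemma pcong_sym n a b : pcong n a b -> pcong n b a.
Proof. by rewrite /pcong => h; rewrite -opprB mulNr rpredN. Qed.

Lemma pcong_trans n a b c : pcong n a b -> pcong n b c -> pcong n a c.
Proof.
rewrite /pcong => h1 h2; have -> : a - c = (a - b) + (b - c) by ring.
by rewrite mulrDl rpredD.
Qed.

Lemma pcongD n a b c d : pcong n a b -> pcong n c d -> pcong n (a + c) (b + d).
Proof.
rewrite /pcong => h1 h2; have -> : a + c - (b + d) = (a - b) + (c - d) by ring.
by rewrite mulrDl rpredD.
Qed.

Lemma pcongN n a b : pcong n a b -> pcong n (- a) (- b).
Proof. by rewrite /pcong => h; rewrite -opprD mulNr rpredN. Qed.

Lemma pcongB n a b c d : pcong n a b -> pcong n c d -> pcong n (a - c) (b - d).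
Proof. by move=> h1 h2; apply: pcongD => //; apply: pcongN. Qed.

Lemma pcongW m n a b : m <= n -> pcong n a b -> pcong m a b.
Proof.
rewrite /pcong => hmn h.
have -> : (a - b) * P ^ (- m) = (a - b) * P ^ (- n) * P ^ (n - m).
  by rewrite -mulrA -PzD; congr (_ * P ^ _); ring.
by rewrite rpredM // Pz_int // subr_ge0.
Qed.

Lemma pcongM0 m n u v : pcong m u 0 -> pcong n v 0 -> pcong (m + n) (u * v) 0.
Proof.
rewrite /pcong !subr0 => h1 h2.
have -> : u * v * P ^ (- (m + n)) = (u * P ^ (- m)) * (v * P ^ (- n)).
  by rewrite opprD PzD; ring.
exact: rpredM.
Qed.

Lemma pcongMl n z a b : z \is a int_num -> pcong n a b -> pcong n (z * a) (z * b).
Proof.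
rewrite /pcong => hz h; rewrite -mulrBr -mulrA; exact: rpredM.
Qed.

Lemma pcongMPz n z : z \is a int_num -> pcong n (z * P ^ n) 0.
Proof.
rewrite /pcong subr0 => hz; rewrite -mulrA -PzD subrr expr0z mulr1 //.
Qed.

Lemma pcong_Pz m n : m <= n -> pcong m (P ^ n) 0.
Proof.
move=> hmn; apply: (pcongW hmn); rewrite -[P ^ n]mul1r; apply: pcongMPz.
exact: int_num1.
Qed.

Lemma pcong_nat n k : n <= 0 -> pcong n (k%:R) 0.
Proof.
move=> hn; rewrite /pcong subr0 rpredM ?natr_int // Pz_int //; lia.
Qed.

Lemma pcong_eq n a b : pcong n a b -> 0 <= a < P ^ n -> 0 <= b < P ^ n -> a = b.
Proof.
rewrite /pcong => /intrP [z hz] /andP [a0 aP] /andP [b0 bP].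
have hlt : `|a - b| < P ^ n.
  rewrite ltr_norml; apply/andP; split; lra.
have : `|(a - b) * P ^ (- n)| < 1.
  rewrite normrM (ger0_norm (ltW (Pz_gt0 _))) PzN ltr_pdivrMr ?Pz_gt0 //.
  by rewrite mul1r.
rewrite hz => h1.
have : (`|z|%:~R : rat) < 1%:~R by rewrite intr_norm.
rewrite ltr_int => hz1.
have z0 : z = 0 by lia.
move: hz; rewrite z0 mulr0z => /eqP; rewrite mulf_eq0 (negbTE (Pz_neq0 _)) orbF subr_eq0.
by move/eqP.
Qed.

Lemma pcongP n a b : pcong n a b -> exists z : int, a = b + z%:~R * P ^ n.
Proof.
rewrite /pcong => /intrP [z hz]; exists z.
have e : a - b = z%:~R * P ^ n by rewrite -hz -mulrA [P ^ (- n) * _]mulrC PzK mulr1.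
by rewrite -e; ring.
Qed.

Lemma pcong0E n a b : pcong n a b <-> pcong n (a - b) 0.
Proof. by rewrite /pcong subr0. Qed.

Lemma pcongM n (k1 k2 : nat) a a' b b' : pcong n a a' -> pcong n b b' ->
  pcong (- k1%:Z) a 0 -> pcong (- k2%:Z) b' 0 ->
  pcong (n - k1%:Z - k2%:Z) (a * b) (a' * b').
Proof.
move=> h1 h2 h3 h4; apply/pcong0E.
have -> : a * b - a' * b' = a * (b - b') + (a - a') * b' by ring.
rewrite -[0]addr0; apply: pcongD.
  have hle : n - k1%:Z - k2%:Z <= - k1%:Z + n by clear -k1 k2 n; lia.
  apply: (pcongW hle).
  by apply: pcongM0 => //; exact: (proj1 (pcong0E n b b') h2).
have hle : n - k1%:Z - k2%:Z <= n + - k2%:Z by clear -k1 k2 n; lia.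
apply: (pcongW hle).
by apply: pcongM0 => //; exact: (proj1 (pcong0E n a a') h1).
Qed.

(** * Rational values of p-adic numbers *)

Local Notation Qp := (Qp p).

Lemma Qp_eq (x y : Qp) : dig x = dig y -> x = y.
Proof.
case: x => dx hx; case: y => dy hy /= e; subst dy; congr exist.
exact: Prop_irrelevance.
Qed.

Lemma mkQp_dig d : digitsP p d -> dig (mkQp p d) = d.
Proof. by move=> h; rewrite /mkQp; case: pselect. Qed.

Lemma mkQp_digK (x : Qp) : mkQp p (dig x) = x.
Proof. by apply: Qp_eq; rewrite mkQp_dig //; case: x. Qed.

Lemma dig_le (x : Qp) j : (dig x j <= p.-1)%N.
Proof. exact: (proj1 (proj2_sig x) j). Qed.

Lemma bndKP (x : Qp) j : j < - (bndK x)%:Z -> dig x j = 0%N.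
Proof. exact: (projT2 (cid (proj2 (proj2_sig x)))). Qed.

Lemma trunc_below (x : Qp) n : n <= - (bndK x)%:Z -> trunc x n = 0.
Proof.
move=> hn; rewrite /trunc.
have -> : `|Num.max (0:int) (n + (bndK x)%:Z)%R|%N = 0%N by lia.
by rewrite big_ord0.
Qed.

Lemma truncS (x : Qp) n :
  trunc x (n + 1) = trunc x n + (dig x n)%:R * P ^ n.
Proof.
rewrite /trunc; set K := bndK x.
case: (boolP (0 <= n + K%:Z)) => hn.
  have e1 : `|Num.max (0:int) (n + 1 + K%:Z)%R|%N = (`|(n + K%:Z)%R|%N).+1 by lia.
  have e2 : `|Num.max (0:int) (n + K%:Z)%R|%N = `|(n + K%:Z)%R|%N by lia.
  rewrite e1 e2 big_ord_recr /=; congr (_ + _).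
  have e : (`|(n + K%:Z)%R|%N)%:Z - K%:Z = n by lia.
  by rewrite e.
have -> : `|Num.max (0:int) (n + 1 + K%:Z)%R|%N = 0%N by lia.
have -> : `|Num.max (0:int) (n + K%:Z)%R|%N = 0%N by lia.
by rewrite !big_ord0 bndKP ?mul0r ?addr0 //; rewrite /K; lia.
Qed.

Lemma trunc_bnd (x : Qp) n : 0 <= trunc x n < P ^ n.
Proof.
elim/(@int_ind_from (- (bndK x)%:Z)): n => [n hn|n hn /andP [h0 h1]].
  by rewrite trunc_below // lexx Pz_gt0.
rewrite truncS PzD expr1z.
have hd : (dig x n)%:R <= (p%:R - 1 : rat).
  rewrite lerBrDr natr1 ler_nat; have := dig_le x n; lia.
have hP := Pz_gt0 n.
apply/andP; split.
  by rewrite addr_ge0 // mulr_ge0 // ltW.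
apply: (lt_le_trans (y := P ^ n + (p%:R - 1) * P ^ n)).
  by rewrite ltr_leD // ler_pM2r.
by rewrite mulrBl mul1r addrC subrK mulrC.
Qed.

Lemma trunc_ge0 (x : Qp) n : 0 <= trunc x n.
Proof. by case/andP: (trunc_bnd x n). Qed.

Lemma trunc_bnd_pcong (x : Qp) n : pcong (- (bndK x)%:Z) (trunc x n) 0.
Proof.
elim/(@int_ind_from (- (bndK x)%:Z)): n => [n hn|n hn h].
  by rewrite trunc_below //; apply: pcong_refl.
rewrite truncS -[0]addr0; apply: pcongD => //.
apply: (pcongW hn); rewrite -[0](mulr0 (dig x n)%:R); apply: pcongMl.
  exact: natr_int.
exact: pcong_Pz (lexx n).
Qed.

Lemma trunc_pcong (x : Qp) m n : m <= n -> pcong m (trunc x n) (trunc x m).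
Proof.
elim/(@int_ind_from m): n => [n hn hmn|n hn IH hmn].
  have -> : n = m by lia.
  exact: pcong_refl.
rewrite truncS -[trunc x m]addr0; apply: pcongD; first exact: IH.
rewrite -[0](mulr0 (dig x n)%:R); apply: pcongMl; first exact: natr_int.
exact: pcong_Pz.
Qed.

Lemma trunc_digit (x : Qp) n : (dig x n)%:R * P ^ n = trunc x (n + 1) - trunc x n.
Proof. by rewrite truncS; ring. Qed.

Lemma trunc_inj (x y : Qp) : (forall n, trunc x n = trunc y n) -> x = y.
Proof.
move=> h; apply: Qp_eq; apply: funext => j.
have : (dig x j)%:R * P ^ j = (dig y j)%:R * P ^ j by rewrite !trunc_digit !h.
by move/(mulIf (Pz_neq0 j)) => /eqP; rewrite eqr_nat => /eqP.
Qed.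

Lemma trunc_pcong_inj (x y : Qp) : (forall n, pcong n (trunc x n) (trunc y n)) -> x = y.
Proof.
move=> h; apply: trunc_inj => n; apply: (pcong_eq (h n)); exact: trunc_bnd.
Qed.

Lemma digof_pcong S j t : 0 <= t < P ^ j -> pcong j S t ->
  pcong (j + 1) S (t + (digof p S j)%:R * P ^ j).
Proof.
move=> /andP [t0 tP] /pcongP [z hz].
have hfl : floor (S / P ^ j) = z.
  rewrite hz mulrDl -mulrA mulfV ?Pz_neq0 // mulr1 floorDrz ?intr_int //.
  rewrite (@floor_def _ _ 0) ?add0r ?intrKfloor //; apply/andP; split.
    by rewrite mulr_ge0 // invr_ge0 ltW // Pz_gt0.
  by rewrite ltr_pdivrMr ?Pz_gt0 // mul1r.
rewrite /digof hfl.
have hp0 : (p%:Z != 0) by apply/eqP; lia.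
have r0 := modz_ge0 z hp0.
have hr : ((`|(z %% p)%Z|%N)%:R : rat) = (z %% p)%Z%:~R.
  by rewrite -[in RHS](gez0_abs r0) pmulrn.
rewrite hr /pcong.
have -> : S - (t + (z %% p)%Z%:~R * P ^ j) = ((z %/ p)%Z)%:~R * P * P ^ j.
  rewrite hz {1}(divz_eq z p) intrD intrM.
  have -> : (p%:Z)%:~R = P by [].
  ring.
rewrite -[_ * P * P ^ j]mulrA (_ : P * P ^ j = P ^ (j + 1)); last by rewrite PzD expr1z mulrC.
rewrite -mulrA PzK mulr1; exact: intr_int.
Qed.

Lemma digof_le S j : (digof p S j <= p.-1)%N.
Proof.
rewrite /digof.
have hp0 : (p%:Z != 0) by apply/eqP; lia.
have r0 := modz_ge0 (floor (S / P ^ j)) hp0.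
have r1 : ((floor (S / P ^ j)) %% p)%Z < p by apply: ltz_pmod; lia.
lia.
Qed.

Lemma digof_pcong0 S j : pcong (j + 1) S 0 -> digof p S j = 0%N.
Proof.
move=> /pcongP [z hz]; rewrite /digof hz add0r PzD expr1z.
have -> : z%:~R * (P ^ j * P) / P ^ j = (z * p)%:~R.
  rewrite intrM; have -> : (p%:Z)%:~R = P by [].
  by rewrite mulrA mulrAC mulfK ?Pz_neq0.
by rewrite intrKfloor modzMl.
Qed.

(* Every operation on Qp is built this way: the j-th digit is read off a
   rational approximation S j of the result, correct modulo p^(j+1). *)
Definition mkQpS (S : int -> rat) : Qp := mkQp p (fun j => digof p (S j) j).

Lemma mkQpS_digitsP S (K : nat) : (forall j, j < - K%:Z -> pcong (j + 1) (S j) 0) ->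
  digitsP p (fun j => digof p (S j) j).
Proof.
move=> hl; split; first by move=> j; exact: digof_le.
by exists K => j hj; apply: digof_pcong0; apply: hl.
Qed.

Lemma trunc_mkQpS S (K : nat) :
  (forall j, pcong (j + 1) (S j) (S (j + 1))) ->
  (forall j, j < - K%:Z -> pcong (j + 1) (S j) 0) ->
  forall n, pcong n (trunc (mkQpS S) n) (S (n - 1)).
Proof.
move=> hc hl; set z := mkQpS S.
have hd : dig z = (fun j => digof p (S j) j).
  by rewrite /z /mkQpS mkQp_dig //; exact: (mkQpS_digitsP hl).
elim/(@int_ind_from (- (maxn K (bndK z))%:Z)) => [n hn|n hn IH].
  rewrite trunc_below; last lia.
  apply: pcong_sym; have := hl (n - 1); rewrite subrK; apply; lia.
have h1 : pcong n (S n) (trunc z n).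
  have := hc (n - 1); rewrite subrK => h2.
  apply: pcong_sym; exact: (pcong_trans IH h2).
have := digof_pcong (trunc_bnd z n) h1.
rewrite truncS addrK => h3; apply: pcong_sym; move: h3.
by rewrite hd.
Qed.

Definition israt (x : Qp) (s : rat) := forall n, pcong n (trunc x n) s.

Lemma israt_mkQpS_const S0 (K : nat) :
  pcong (- K%:Z) S0 0 -> israt (mkQpS (fun _ => S0)) S0.
Proof.
move=> h n; apply: (@trunc_mkQpS (fun _ => S0) K) => //.
  by move=> j; exact: pcong_refl.
by move=> j hj; apply: (pcongW _ h); lia.
Qed.

Lemma israt_inj x y s : israt x s -> israt y s -> x = y.
Proof.
move=> hx hy; apply: trunc_pcong_inj => n; apply: (pcong_trans (hx n)).
exact: pcong_sym.
Qed.

Lemma israt_bnd x s : israt x s -> pcong (- (bndK x)%:Z) s 0.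
Proof.
move=> h; apply: (pcong_trans (pcong_sym (h (- (bndK x)%:Z)))).
exact: trunc_bnd_pcong.
Qed.

Lemma trunc_add (x y : Qp) n :
  pcong n (trunc (addQp x y) n) (trunc x n + trunc y n).
Proof.
have hc : forall j, pcong (j + 1) (trunc x (j + 1) + trunc y (j + 1))
                     (trunc x (j + 1 + 1) + trunc y (j + 1 + 1)).
  move=> j; apply: pcong_sym; apply: pcongD; apply: trunc_pcong; lia.
have hl : forall j, j < - (bndK x + bndK y)%N%:Z ->
   pcong (j + 1) (trunc x (j + 1) + trunc y (j + 1)) 0.
  move=> j hj; rewrite !trunc_below ?addr0 ?pcong_refl //; lia.
have := @trunc_mkQpS (fun j => trunc x (j + 1) + trunc y (j + 1)) _ hc hl n.
by rewrite /= subrK.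
Qed.

Lemma trunc_opp (x : Qp) n : pcong n (trunc (oppQp x) n) (- trunc x n).
Proof.
have hc : forall j, pcong (j + 1) (P ^ (j + 1) - trunc x (j + 1))
                     (P ^ (j + 1 + 1) - trunc x (j + 1 + 1)).
  move=> j; apply: pcongB.
    apply: (@pcong_trans _ _ 0); first by apply: pcong_Pz.
    by apply: pcong_sym; apply: pcong_Pz; lia.
  apply: pcong_sym; apply: trunc_pcong; lia.
have hl : forall j, j < - (bndK x)%:Z -> pcong (j + 1) (P ^ (j + 1) - trunc x (j + 1)) 0.
  move=> j hj; rewrite trunc_below ?subr0; last lia.
  exact: pcong_Pz.
have := @trunc_mkQpS (fun j => P ^ (j + 1) - trunc x (j + 1)) _ hc hl n.
rewrite /= subrK => h; apply: (pcong_trans h).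
rewrite -[X in pcong _ _ X]add0r; apply: pcongB; first by apply: pcong_Pz.
exact: pcong_refl.
Qed.

Lemma trunc_mul (x y : Qp) n :
  pcong n (trunc (mulQp x y) n)
    (trunc x (n + (bndK x + bndK y)%N%:Z) * trunc y (n + (bndK x + bndK y)%N%:Z)).
Proof.
set K := (bndK x + bndK y)%N.
have hc : forall j, pcong (j + 1) (trunc x (j + 1 + K%:Z) * trunc y (j + 1 + K%:Z))
         (trunc x (j + 1 + 1 + K%:Z) * trunc y (j + 1 + 1 + K%:Z)).
  move=> j; apply: pcong_sym.
  have h := @pcongM (j + 1 + K%:Z) (bndK x) (bndK y)
      (trunc x (j + 1 + 1 + K%:Z)) (trunc x (j + 1 + K%:Z))
      (trunc y (j + 1 + 1 + K%:Z)) (trunc y (j + 1 + K%:Z)).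
  have e : j + 1 + K%:Z - (bndK x)%:Z - (bndK y)%:Z = j + 1 by rewrite /K; lia.
  rewrite e in h; apply: h; try apply: trunc_bnd_pcong.
    apply: trunc_pcong; lia.
  apply: trunc_pcong; lia.
have hl : forall j, j < - (2 * bndK x + bndK y)%N%:Z ->
   pcong (j + 1) (trunc x (j + 1 + K%:Z) * trunc y (j + 1 + K%:Z)) 0.
  move=> j hj; rewrite trunc_below ?mul0r ?pcong_refl //; rewrite /K; lia.
have := @trunc_mkQpS (fun j => trunc x (j + 1 + K%:Z) * trunc y (j + 1 + K%:Z)) _ hc hl n.
by rewrite /= subrK.
Qed.

Lemma trunc_sub (x y : Qp) n : pcong n (trunc (subQp x y) n) (trunc x n - trunc y n).
Proof.
apply: (pcong_trans (trunc_add _ _ _)); apply: pcongD; first exact: pcong_refl.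
exact: trunc_opp.
Qed.

Lemma isratD x y s t : israt x s -> israt y t -> israt (addQp x y) (s + t).
Proof.
move=> hx hy n; apply: (pcong_trans (trunc_add _ _ _)); exact: pcongD.
Qed.

Lemma isratN x s : israt x s -> israt (oppQp x) (- s).
Proof.
move=> hx n; apply: (pcong_trans (trunc_opp _ _)); exact: pcongN.
Qed.

Lemma isratB x y s t : israt x s -> israt y t -> israt (subQp x y) (s - t).
Proof. by move=> hx hy; apply: isratD => //; apply: isratN. Qed.

Lemma isratM x y s t : israt x s -> israt y t -> israt (mulQp x y) (s * t).
Proof.
move=> hx hy n; apply: (pcong_trans (trunc_mul _ _ _)).
set K := (bndK x + bndK y)%N.
have h := @pcongM (n + K%:Z) (bndK x) (bndK y)
   (trunc x (n + K%:Z)) s (trunc y (n + K%:Z)) t (hx _) (hy _) (trunc_bnd_pcong _ _) (israt_bnd hy).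
have e : n + K%:Z - (bndK x)%:Z - (bndK y)%:Z = n by rewrite /K; lia.
by rewrite e in h.
Qed.

Lemma natQpE k : natQp p k = mkQpS (fun _ => k%:R).
Proof.
rewrite /natQp /mkQpS; congr (mkQp p _); apply: funext => j.
case: j => [n|n] /=.
  rewrite /digof -exprnP -natrX floor_natr_div modz_nat.
  by [].
apply/esym; apply: digof_pcong0; apply: pcong_nat; lia.
Qed.

Lemma israt_nat k : israt (natQp p k) k%:R.
Proof.
rewrite natQpE; apply: (@israt_mkQpS_const _ 0); apply: pcong_nat; lia.
Qed.

Lemma Pz_lt1 a : a < 0 -> P ^ a < 1.
Proof. by move=> ha; rewrite -[1](expr0z P) ltr_eXz2l // P_gt1. Qed.

Lemma pinvQpE n : pinvQp p n = mkQpS (fun _ => P ^ (- n%:Z)).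
Proof.
rewrite /pinvQp /mkQpS; congr (mkQp p _); apply: funext => j.
case: (ltgtP j (- n%:Z)) => hj.
- apply/esym; apply: digof_pcong0; apply: pcong_Pz; lia.
- rewrite /digof -PzN -PzD (@floor_def _ _ 0) ?mod0z //.
  rewrite Pz_lt1 ?andbT; last lia.
  exact: ltW (Pz_gt0 _).
- rewrite hj /digof mulfV ?Pz_neq0 // floor1 modz_small //; lia.
Qed.

Lemma israt_pinv n : israt (pinvQp p n) (P ^ (- n%:Z)).
Proof.
rewrite pinvQpE; apply: (@israt_mkQpS_const _ n); apply: pcong_Pz; lia.
Qed.

Lemma israt0 : israt (zeroQp p) 0.
Proof. exact: israt_nat 0. Qed.

Lemma trunc_mono (z : Qp) m n : m <= n -> trunc z m <= trunc z n.
Proof.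
elim/(@int_ind_from m): n => [n hn hmn|n hn IH hmn].
  by have -> : n = m by lia.
rewrite truncS; apply: (le_trans (IH hn)); rewrite lerDl mulr_ge0 //.
exact: ltW (Pz_gt0 _).
Qed.

Lemma trunc_pcong_eq0 (z : Qp) n : pcong n (trunc z n) 0 -> trunc z n = 0.
Proof.
move=> h; apply: (pcong_eq h); first exact: trunc_bnd.
by rewrite lexx Pz_gt0.
Qed.

Lemma trunc_eq0_digits (z : Qp) n : trunc z n = 0 -> forall j, j < n -> dig z j = 0%N.
Proof.
move=> h j hj.
have h1 : trunc z (j + 1) = 0.
  apply/eqP; rewrite eq_le trunc_ge0 andbT -h; apply: trunc_mono; lia.
have h2 : trunc z j = 0.
  apply/eqP; rewrite eq_le trunc_ge0 andbT -h; apply: trunc_mono; lia.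
have := trunc_digit z j; rewrite h1 h2 subrr => /eqP.
rewrite mulf_eq0 (negbTE (Pz_neq0 _)) orbF pnatr_eq0 => /eqP //.
Qed.

Lemma trunc_digits0 (z : Qp) n : (forall j, j < n -> dig z j = 0%N) -> trunc z n = 0.
Proof.
move=> h.
suff : forall m, m <= n -> trunc z m = 0 by apply.
elim/(@int_ind_from (- (bndK z)%:Z)) => [m hm _|m hm IH hmn].
  exact: trunc_below.
rewrite truncS IH; last lia.
by rewrite h ?mul0r ?addr0 //; lia.
Qed.

Lemma inBallE g (a x : Qp) : inBall g a x <-> pcong (- g) (trunc (subQp x a) (- g)) 0.
Proof.
split.
  move=> h; rewrite trunc_digits0 //; exact: pcong_refl.
by move=> /trunc_pcong_eq0 h; apply: trunc_eq0_digits.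
Qed.

Lemma inBall_israt g (a x : Qp) s : israt (subQp x a) s -> pcong (- g) s 0 -> inBall g a x.
Proof.
move=> h1 h2; apply/inBallE; apply: (pcong_trans (h1 _)); exact: h2.
Qed.

Lemma natrXP k : (p ^ k)%:R = P ^ (k%:Z).
Proof. by rewrite natrX exprnP. Qed.

Definition grid (n k : nat) : Qp := mulQp (natQp p k) (pinvQp p n).

Lemma israt_grid n k : israt (grid n k) (k%:R * P ^ (- n%:Z)).
Proof. apply: isratM; [exact: israt_nat | exact: israt_pinv]. Qed.

Lemma subQp0 (x : Qp) : subQp x (zeroQp p) = x.
Proof.
apply: trunc_pcong_inj => n; apply: (pcong_trans (trunc_sub _ _ _)).
rewrite -[X in pcong _ _ X]subr0; apply: pcongB; first exact: pcong_refl.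
exact: israt0.
Qed.

Lemma addQp0 (x : Qp) : addQp x (zeroQp p) = x.
Proof.
apply: trunc_pcong_inj => n; apply: (pcong_trans (trunc_add _ _ _)).
rewrite -[X in pcong _ _ X]addr0; apply: pcongD; first exact: pcong_refl.
exact: israt0.
Qed.

Lemma grid_inBall n k : inBall n%:Z (zeroQp p) (grid n k).
Proof.
apply: (inBall_israt (s := k%:R * P ^ (- n%:Z))).
  by rewrite subQp0; exact: israt_grid.
rewrite -(mulr0 k%:R); apply: pcongMl; first exact: natr_int.
exact: pcong_Pz.
Qed.

Lemma grid_notinBall n k1 r :
  (0 < r < p)%N -> ~ inBall n%:Z (zeroQp p) (grid n.+1 (k1 * p + r)).
Proof.
move=> hr hin; move/inBallE: hin; rewrite subQp0 => h.
have h2 := israt_grid n.+1 (k1 * p + r) (- n%:Z).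
have e : (k1 * p + r)%:R * P ^ (- n.+1%:Z) = k1%:R * P ^ (- n%:Z) + r%:R * P ^ (- n.+1%:Z).
  have -> : - n.+1%:Z = - n%:Z + (-1) by lia.
  rewrite natrD natrM PzD exprN1; field; exact: P_neq0.
rewrite e in h2.
have h3 : pcong (- n%:Z) (trunc (grid n.+1 (k1 * p + r)) (- n%:Z)) (r%:R * P ^ (- n.+1%:Z)).
  apply: (pcong_trans h2); rewrite -[X in pcong _ _ X]add0r; apply: pcongD; last exact: pcong_refl.
  rewrite -(mulr0 k1%:R); apply: pcongMl; [exact: natr_int | exact: pcong_Pz].
have hb : 0 <= r%:R * P ^ (- n.+1%:Z) < P ^ (- n%:Z).
  apply/andP; split; first by rewrite mulr_ge0 // ltW // Pz_gt0.
  have -> : P ^ (- n%:Z) = P * P ^ (- n.+1%:Z).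
    by rewrite -[X in X * _]expr1z -PzD; congr (_ ^ _); lia.
  rewrite ltr_pM2r ?Pz_gt0 // ltr_nat; lia.
have := pcong_eq h3 (trunc_bnd _ _) hb.
rewrite (trunc_pcong_eq0 h) => /esym /eqP; rewrite mulf_eq0 (negbTE (Pz_neq0 _)) orbF pnatr_eq0.
lia.
Qed.

Lemma gridD n m k0 t : grid n (k0 + p ^ (n + m) * t) = addQp (grid n k0) (natQp p (p ^ m * t)).
Proof.
apply: (israt_inj (israt_grid _ _)).
have -> : (k0 + p ^ (n + m) * t)%:R * P ^ (- n%:Z) = k0%:R * P ^ (- n%:Z) + (p ^ m * t)%:R.
  rewrite natrD mulrDl natrM natrXP natrM natrXP; congr (_ + _).
  rewrite mulrAC -PzD; congr (_ * _); congr (_ ^ _); lia.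
apply: isratD; [exact: israt_grid | exact: israt_nat].
Qed.

Lemma grid_Smulp n k : grid n.+1 (k * p) = grid n k.
Proof.
apply: (israt_inj (israt_grid _ _)).
have -> : (k * p)%:R * P ^ (- n.+1%:Z) = k%:R * P ^ (- n%:Z).
  rewrite natrM -mulrA; congr (_ * _).
  by rewrite -[X in X * _]expr1z -PzD; congr (_ ^ _); lia.
exact: israt_grid.
Qed.

Lemma nat_inBall m t : inBall (- m%:Z) (zeroQp p) (natQp p (p ^ m * t)).
Proof.
apply: (inBall_israt (s := (p ^ m * t)%:R)).
  by rewrite subQp0; exact: israt_nat.
rewrite opprK natrM natrXP mulrC -[0](mulr0 t%:R); apply: pcongMl; first exact: natr_int.
exact: pcong_Pz.
Qed.

Lemma periodic_natQp (T : Type) (f : Qp -> T) M :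
  (forall x, f (addQp x (natQp p (p ^ M))) = f x) ->
  forall t x, f (addQp x (natQp p (p ^ M * t))) = f x.
Proof.
move=> hf; elim => [|t IH] x.
  by rewrite muln0 -/(zeroQp p) addQp0.
have -> : addQp x (natQp p (p ^ M * t.+1)) =
    addQp (addQp x (natQp p (p ^ M * t))) (natQp p (p ^ M)).
  apply: trunc_pcong_inj => n.
  apply: (pcong_trans (trunc_add _ _ _)); apply: pcong_sym.
  apply: (pcong_trans (trunc_add _ _ _)).
  apply: (@pcong_trans _ _ (trunc x n + (p ^ M * t)%:R + (p ^ M)%:R)).
    apply: pcongD; last exact: israt_nat.
    apply: (pcong_trans (trunc_add _ _ _)); apply: pcongD; [exact: pcong_refl | exact: israt_nat].
  rewrite -addrA; apply: pcongD; first exact: pcong_refl.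
  rewrite -natrD mulnS addnC; apply: pcong_sym; exact: israt_nat.
by rewrite hf IH.
Qed.

(* y in p^M Z_p is approximated, to within the radius on which f is constant
   around x + y, by a natural multiple of p^M; periodicity absorbs it. *)
Lemma periodic_ball (f : Qp -> C) M :
  locconst f -> (forall x, f (addQp x (natQp p (p ^ M))) = f x) ->
  forall x y, inBall (- M%:Z) (zeroQp p) y -> f (addQp x y) = f x.
Proof.
move=> f_lc f_per x y hy.
have [m hm] := f_lc (addQp x y).
set K := (M + `|m|)%N.
have hyM : trunc y M%:Z = 0.
  move/inBallE: hy; rewrite opprK subQp0; exact: trunc_pcong_eq0.
have hyR : pcong M%:Z (trunc y K%:Z) 0.
  rewrite -hyM; apply: trunc_pcong; rewrite /K; lia.
have [z hz] := pcongP hyR; rewrite add0r in hz.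
have z0 : 0 <= z.
  have := trunc_ge0 y K%:Z; rewrite hz => h.
  by move: h; rewrite pmulr_lge0 ?Pz_gt0 // ler0z.
set t := `|z|%N.
have ht : trunc y K%:Z = (p ^ M * t)%:R.
  rewrite hz natrM natrXP [RHS]mulrC; congr (_ * _).
  rewrite /t [RHS]pmulrn; congr (_ *~ _); lia.
rewrite -(periodic_natQp f_per t x); apply: esym; apply: hm.
apply/inBallE.
apply: (pcong_trans (trunc_sub _ _ _)).
apply: (@pcong_trans _ _ ((trunc x (- m) + (p ^ M * t)%:R) - (trunc x (- m) + trunc y (- m)))).
  apply: pcongB; apply: (pcong_trans (trunc_add _ _ _)); apply: pcongD; try exact: pcong_refl.
  exact: israt_nat.
rewrite -ht.
have -> : trunc x (- m) + trunc y K%:Z - (trunc x (- m) + trunc y (- m)) =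
  trunc y K%:Z - trunc y (- m) by ring.
apply: (proj1 (pcong0E _ _ _)); apply: trunc_pcong; rewrite /K; lia.
Qed.

(** * Riemann sums for the Haar integral *)

(* The Riemann sum of f over the grid p^-n Z / p^m Z.  It does not depend on the
   adapted pair (m, n), which makes [integral] independent of its choice. *)
Definition riemann_sum (f : Qp -> C) (m n : nat) : C :=
  ((p%:R : C)^-1) ^+ m * \sum_(k < (p ^ (n + m))%N) f (grid n k).

Lemma pC_neq0 : (p%:R : C) != 0.
Proof. by rewrite pnatr_eq0; lia. Qed.

Lemma inBall_le g g' (a x : Qp) : g <= g' -> inBall g a x -> inBall g' a x.
Proof. by move=> hg h j hj; apply: h; lia. Qed.

Lemma adaptedSm f m n : adapted (p:=p) f (m, n) -> adapted (p:=p) f (m.+1, n).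
Proof.
case=> h1 h2; split => // x y hy; apply: h2; apply: (inBall_le _ hy) => /=; lia.
Qed.

Lemma adaptedSn f m n : adapted (p:=p) f (m, n) -> adapted (p:=p) f (m, n.+1).
Proof.
case=> h1 h2; split => // x hx; apply: (inBall_le _ (h1 x hx)) => /=; lia.
Qed.

Lemma riemann_sumSm f m n :
  adapted (p:=p) f (m, n) -> riemann_sum f m n = riemann_sum f m.+1 n.
Proof.
case=> _ h2; rewrite /riemann_sum addnS expnS (sum_ord_mul (fun k => f (grid n k))).
have e : forall i : 'I_p, \sum_(r < p ^ (n + m)) f (grid n (i * p ^ (n + m) + r)%N) =
      \sum_(r < p ^ (n + m)) f (grid n r).
  move=> i; apply: eq_bigr => r _.
  by rewrite addnC mulnC gridD h2 //; apply: nat_inBall.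
rewrite (eq_bigr _ (fun i _ => e i)) sumr_const card_ord exprSr.
rewrite -mulr_natr; field; exact: pC_neq0.
Qed.

Lemma riemann_sumSn f m n :
  adapted (p:=p) f (m, n) -> riemann_sum f m n = riemann_sum f m n.+1.
Proof.
case=> h1 _; rewrite /riemann_sum addSn expnS mulnC.
rewrite (sum_ord_mul (fun k => f (grid n.+1 k))); congr (_ * _).
apply: eq_bigr => k _; have p0 : (0 < p)%N by lia.
rewrite (bigD1 (Ordinal p0)) //= addn0 grid_Smulp big1 ?addr0 //.
move=> r hr; apply/eqP; apply: contraT => /h1 hin; exfalso; apply: (grid_notinBall _ hin).
have : (r : nat) != 0%N by move: hr; apply: contra => /eqP e; apply/eqP; apply: val_inj.
case: r {hr hin} => r hr /=; lia.
Qed.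

Lemma adapted_refine f m n i j :
  adapted (p:=p) f (m, n) -> adapted (p:=p) f ((m + i)%N, (n + j)%N).
Proof.
move=> h; elim: i => [|i IH].
  elim: j => [|j IHj]; first by rewrite ?addn0.
  by rewrite ?addn0 addnS; apply: adaptedSn; rewrite -[m]addn0.
by rewrite addnS; apply: adaptedSm.
Qed.

Lemma riemann_sum_refine f m n i j : adapted (p:=p) f (m, n) ->
  riemann_sum f m n = riemann_sum f (m + i)%N (n + j)%N.
Proof.
move=> h; elim: i => [|i IH].
  elim: j => [|j IHj]; first by rewrite ?addn0.
  rewrite IHj addnS; apply: riemann_sumSn; exact: adapted_refine.
rewrite IH addnS; apply: riemann_sumSm; exact: adapted_refine.
Qed.

Lemma integral_riemann_sum f m n :
  adapted (p:=p) f (m, n) -> Defs.integral f = riemann_sum f m n.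
Proof.
move=> h; rewrite /Defs.integral; case: pselect => [h'|h']; last first.
  by exfalso; apply: h'; exists (m, n).
case: (cid h') => [[m' n'] hm'] /=.
change (riemann_sum f m' n' = riemann_sum f m n).
rewrite (riemann_sum_refine m n hm') (riemann_sum_refine m' n' h).
by rewrite [(m + m')%N]addnC [(n + n')%N]addnC.
Qed.

Lemma chi_israt (X : Qp) s : israt X s -> chi X = cexp2pi (ratr s).
Proof.
move=> h; change (cexp2pi (ratr (trunc X 0)) = cexp2pi (ratr s)).
have [z hz] := pcongP (h 0); rewrite hz expr0z mulr1.
apply: cexp2pi_ratrDint; exact: intr_int.
Qed.

Lemma trunc_mulE (x y : Qp) n m : n + (bndK x)%:Z + (bndK y)%:Z <= m ->
  pcong n (trunc (mulQp x y) n) (trunc x m * trunc y m).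
Proof.
move=> hm; apply: (pcong_trans (trunc_mul _ _ _)); set K := (bndK x + bndK y)%N.
have h := @pcongM (n + K%:Z) (bndK x) (bndK y)
   (trunc x (n + K%:Z)) (trunc x m) (trunc y (n + K%:Z)) (trunc y m).
have e : n + K%:Z - (bndK x)%:Z - (bndK y)%:Z = n by rewrite /K; lia.
rewrite e in h; apply: h; try apply: trunc_bnd_pcong.
  apply: pcong_sym; apply: trunc_pcong; rewrite /K; lia.
apply: pcong_sym; apply: trunc_pcong; rewrite /K; lia.
Qed.

Lemma chi_ball_invariant (xi x y : Qp) (M : nat) s : israt xi s -> pcong (- M%:Z) s 0 ->
  inBall (- M%:Z) (zeroQp p) y -> chi (mulQp xi (addQp x y)) = chi (mulQp xi x).
Proof.
move=> hxi hs hy.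
suff e : trunc (mulQp xi (addQp x y)) 0 = trunc (mulQp xi x) 0.
  by rewrite /chi /fracval e.
set m : int := (bndK xi + bndK (addQp x y) + bndK x + M)%N%:Z.
have h1 := @trunc_mulE xi (addQp x y) 0 m ltac:(rewrite /m; lia).
have h2 := @trunc_mulE xi x 0 m ltac:(rewrite /m; lia).
apply: (pcong_eq _ (trunc_bnd _ _) (trunc_bnd _ _)).
apply: (pcong_trans h1); apply: pcong_sym; apply: (pcong_trans h2); apply: pcong_sym.
have hxm : pcong (- M%:Z) (trunc xi m) 0.
  apply: (pcong_trans _ hs); apply: (@pcongW _ m); [rewrite /m; lia | exact: hxi].
have hyM : trunc y M%:Z = 0.
  move/inBallE: hy; rewrite opprK subQp0; exact: trunc_pcong_eq0.
have hym : pcong M%:Z (trunc (addQp x y) m - trunc x m) 0.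
  apply: (@pcong_trans _ _ (trunc y m)).
    apply/pcong0E; apply: (@pcongW _ m); first by rewrite /m; lia.
    have := trunc_add x y m => /pcong0E.
    have -> : trunc (addQp x y) m - (trunc x m + trunc y m) =
              trunc (addQp x y) m - trunc x m - trunc y m by ring.
    by [].
  rewrite -hyM; apply: trunc_pcong; rewrite /m; lia.
have := pcongM0 hxm hym; rewrite addrC subrr => h.
apply/pcong0E; have -> : trunc xi m * trunc (addQp x y) m - trunc xi m * trunc x m =
   trunc xi m * (trunc (addQp x y) m - trunc x m) by ring.
exact: h.
Qed.

Lemma Ip_grid N k : (k < p ^ N)%N -> Ip (grid N k).
Proof.
move=> hk; rewrite /Ip /=; set a := grid N k.
have hlt : k%:R * P ^ (- N%:Z) < 1.
  by rewrite PzN ltr_pdivrMr ?Pz_gt0 // mul1r -natrXP ltr_nat.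
have hge : 0 <= k%:R * P ^ (- N%:Z) by rewrite mulr_ge0 // ltW // Pz_gt0.
have ht : forall n, 0 <= n -> trunc a n = k%:R * P ^ (- N%:Z).
  move=> n hn; apply: (pcong_eq (israt_grid N k n) (trunc_bnd _ _)).
  rewrite hge /=; apply: (lt_le_trans hlt).
  by rewrite -[1](expr0z P) ler_weXz2l // ltW // P_gt1.
rewrite -[RHS]mkQp_digK /fracQp; congr (mkQp p _); apply: funext => j.
case: ifP => // hj; apply/esym/eqP.
have := trunc_digit a j; rewrite !ht ?subrr; try lia.
by move/eqP; rewrite mulf_eq0 (negbTE (Pz_neq0 _)) orbF pnatr_eq0.
Qed.

Lemma grid_eq0 N k : (k < p ^ N)%N -> grid N k = grid N 0 -> k = 0%N.
Proof.
move=> hk e.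
have hlt : k%:R * P ^ (- N%:Z) < 1.
  by rewrite PzN ltr_pdivrMr ?Pz_gt0 // mul1r -natrXP ltr_nat.
have h1 := israt_grid N k 0; rewrite e in h1.
have h2 := israt_grid N 0 0; rewrite mul0r in h2.
have h3 := pcong_trans (pcong_sym h1) h2.
have b1 : 0 <= k%:R * P ^ (- N%:Z) < P ^ 0.
  by rewrite expr0z hlt andbT mulr_ge0 // ltW // Pz_gt0.
have b2 : 0 <= (0:rat) < P ^ 0 by rewrite expr0z lexx ltr01.
have := pcong_eq h3 b1 b2.
move/eqP; rewrite mulf_eq0 (negbTE (Pz_neq0 _)) orbF pnatr_eq0 => /eqP //.
Qed.

Lemma inBall_subQp n (x a : Qp) : inBall n (zeroQp p) (subQp x a) -> inBall n (zeroQp p) a ->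
  inBall n (zeroQp p) x.
Proof.
move=> /inBallE h1 /inBallE h2; apply/inBallE; rewrite subQp0.
rewrite subQp0 in h2; rewrite subQp0 in h1.
have h3 : pcong (- n) (trunc x (- n) - trunc a (- n)) 0.
  exact: (pcong_trans (pcong_sym (trunc_sub x a (- n))) h1).
have h4 := pcongD h3 h2.
by rewrite subrK add0r in h4.
Qed.

Lemma subQpDAC (x y a : Qp) : subQp (addQp x y) a = addQp (subQp x a) y.
Proof.
apply: trunc_pcong_inj => n.
apply: (pcong_trans (trunc_sub _ _ _)); apply: pcong_sym; apply: (pcong_trans (trunc_add _ _ _)).
apply: (@pcong_trans _ _ (trunc x n - trunc a n + trunc y n)).
  apply: pcongD; [exact: trunc_sub | exact: pcong_refl].
apply: (@pcong_trans _ _ (trunc x n + trunc y n - trunc a n)); last first.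
  apply: pcongB; [apply: pcong_sym; exact: trunc_add | exact: pcong_refl].
have -> : trunc x n - trunc a n + trunc y n = trunc x n + trunc y n - trunc a n by ring.
exact: pcong_refl.
Qed.

End PadicArithmetic.

(** * Test functions in D_N^M *)

Section TestFunction.
Variable p : nat.
Hypothesis p_gt1 : (1 < p)%N.
Local Notation P := (p%:R : rat).
Local Notation Qp := (Qp p).
Local Notation grid := (grid p).
Variables (M N : nat) (phi : Qp -> C).
Hypothesis phi_DNM : DNM N M phi.
Local Notation Pn := (p ^ (M + N))%N.
Local Notation pM := (((p%:R : C)^-1) ^+ M).

Lemma phi_supp x : phi x != 0 -> inBall N%:Z (zeroQp p) x.
Proof. by case: phi_DNM => _ _ h; apply: h. Qed.

Lemma phi_per x : phi (addQp x (natQp p (p ^ M))) = phi x.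
Proof. by case: phi_DNM => _ h _; apply: h. Qed.

Lemma phi_ball x y : inBall (- M%:Z) (zeroQp p) y -> phi (addQp x y) = phi x.
Proof. by case: phi_DNM => [[hl _] _ _]; apply: (periodic_ball p_gt1 hl phi_per). Qed.

Lemma fourier_grid l : fourier phi (grid M l) = pM *
  \sum_(j < (p ^ (N + M))%N)
    cexp2pi (ratr ((l%:R * P ^ (- M%:Z)) * (j%:R * P ^ (- N%:Z)))) * phi (grid N j).
Proof.
rewrite /fourier (@integral_riemann_sum _ p_gt1 _ M N).
  rewrite /riemann_sum; congr (_ * _); apply: eq_bigr => j _; congr (_ * _).
  apply: (chi_israt p_gt1); apply: (isratM p_gt1); exact: (israt_grid p_gt1).
split => /=.
  move=> x hx; apply: phi_supp; apply: contraNneq hx => ->; by rewrite mulr0.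
move=> x y hy; rewrite (phi_ball x hy) (chi_ball_invariant p_gt1 _ (israt_grid p_gt1 M l) _ hy) //.
rewrite -(mulr0 l%:R); apply: pcongMl; [exact: natr_int | exact: pcong_Pz].
Qed.

Lemma inner_translate (a b : Qp) : inBall N%:Z (zeroQp p) a ->
  inner (translate a phi) (translate b phi) =
  pM * \sum_(j < (p ^ (N + M))%N) phi (subQp (grid N j) a) * (phi (subQp (grid N j) b))^*.
Proof.
move=> ha; rewrite /inner (@integral_riemann_sum _ p_gt1 _ M N) //; split => /=.
  move=> x; rewrite /translate => hx.
  apply: (inBall_subQp p_gt1 (a := a)) => //.
  by apply: phi_supp; move: hx; rewrite mulf_eq0 negb_or => /andP [].
move=> x y hy; rewrite /translate (subQpDAC p_gt1 x y a) (subQpDAC p_gt1 x y b).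
have e1 := phi_ball (subQp x a) hy; have e2 := phi_ball (subQp x b) hy.
exact: (congr2 (fun u v => u * v^*) e1 e2).
Qed.

Lemma phi_grid_mod i : phi (grid N i) = phi (grid N (i %% Pn)).
Proof.
have e : i = (i %% Pn + p ^ (N + M) * (i %/ Pn))%N.
  by rewrite addnC [(N + M)%N]addnC mulnC -divn_eq.
rewrite {1}e (gridD p_gt1).
exact: (periodic_natQp p_gt1 phi_per).
Qed.

Lemma phi_grid_sub j k : (k <= Pn)%N ->
  phi (subQp (grid N j) (grid N k)) = phi (grid N ((j + Pn - k) %% Pn)).
Proof.
move=> hk; rewrite -phi_grid_mod -phi_per; congr phi.
apply: (israt_inj p_gt1 (s := (j + Pn - k)%N%:R * P ^ (- N%:Z))).
2: exact: (israt_grid p_gt1).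
have -> : (j + Pn - k)%N%:R * P ^ (- N%:Z) =
  (j%:R * P ^ (- N%:Z) - k%:R * P ^ (- N%:Z)) + (p ^ M)%:R.
  rewrite natrB; last lia.
  rewrite natrD !natrXP // mulrBl mulrDl -(PzD p_gt1).
  have -> : (M + N)%N%:Z + - N%:Z = M%:Z by lia.
  ring.
apply: (isratD p_gt1); last exact: (israt_nat p_gt1).
apply: (isratB p_gt1); exact: (israt_grid p_gt1).
Qed.

Local Notation c j := (phi (grid N j)).

Lemma inner_translate_grid k : (k <= Pn)%N ->
  inner (translate (grid N k) phi) (translate (grid N 0) phi) =
  pM * \sum_(j < Pn) c j * (c ((j + k) %% Pn))^*.
Proof.
move=> hk; rewrite inner_translate; last exact: (grid_inBall p_gt1).
rewrite [(N + M)%N]addnC; congr (_ * _).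
rewrite (eq_bigr (fun j : 'I_Pn => c ((j + Pn - k) %% Pn) * (c j)^*)); last first.
  move=> j _; have := phi_grid_sub j (leq0n Pn).
  rewrite subn0 modnDr (modn_small (ltn_ord j)) => e0.
  exact: (congr2 (fun u v => u * v^*) (phi_grid_sub j hk) e0).
have Pn_gt0 : (0 < Pn)%N by rewrite expn_gt0 ltnW.
pose shift (j : 'I_Pn) : 'I_Pn := Ordinal (ltn_pmod (j + k) Pn_gt0).
have shift_inj : injective shift.
  move=> j1 j2 /(congr1 val) /= e; apply: val_inj => /=.
  by rewrite -(modn_shiftK (ltn_ord j1) hk) -(modn_shiftK (ltn_ord j2) hk) e.
rewrite [LHS](reindex_inj shift_inj); apply: eq_bigr => j _.
by rewrite /= (modn_shiftK (ltn_ord j) hk).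
Qed.

Lemma norm_fourier_chi l k :
  `|fourier phi (grid M l)| ^+ 2 * chi (grid (M + N) (l * k)) =
  pM ^+ 2 * \sum_(j < Pn) \sum_(j' < Pn) (c j * (c j')^*) *
      cexp2pi (ratr (l%:R * (j%:Z - j'%:Z + k%:Z)%:~R / Pn%:R)).
Proof.
have conjM (a b : C) : (a * b)^* = a^* * b^* by exact: rmorphM.
have conj_sum (F : 'I_Pn -> C) : (\sum_j F j)^* = \sum_j (F j)^* by exact: rmorph_sum.
have conj_pM : pM^* = pM by rewrite rmorphXn fmorphV rmorph_nat.
rewrite normCK fourier_grid [(N + M)%N]addnC conjM conj_sum conj_pM.
rewrite (chi_israt p_gt1 (israt_grid p_gt1 (M + N) (l * k))).
rewrite mulrACA -expr2 -mulrA; congr (_ * _).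
rewrite mulr_suml mulr_suml; apply: eq_bigr => j _.
rewrite mulr_sumr mulr_suml; apply: eq_bigr => j' _.
rewrite conjM conj_cexp2pi.
have -> : forall a b u v w : C, a * u * (b * v) * w = (u * v) * (a * b * w).
  by move=> a b u v w; ring.
congr (_ * _).
rewrite -!cexp2piD -rmorphN -!rmorphD; congr (cexp2pi (ratr _)).
have PMN : P ^ (- (M + N)%N%:Z) = P ^ (- M%:Z) * P ^ (- N%:Z).
  by rewrite -(PzD p_gt1); congr (_ ^ _); lia.
have hM := Pz_neq0 p_gt1 M%:Z; have hN := Pz_neq0 p_gt1 N%:Z.
have Pn_rat : (Pn%:R : rat) = P ^ M%:Z * P ^ N%:Z by rewrite natrXP -(PzD p_gt1).
rewrite !intrD natrM Pn_rat PMN intrN -!pmulrn !(PzN p).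
by field; rewrite hM hN.
Qed.

Lemma sum_norm_fourier_chi k : (k < Pn)%N ->
  \sum_(l < Pn) `|fourier phi (grid M l)| ^+ 2 * chi (grid (M + N) (l * k))
  = (p ^ N)%:R * inner (translate (grid N k) phi) (translate (grid N 0) phi).
Proof.
move=> hk; have Pn_gt0 : (0 < Pn)%N by rewrite expn_gt0 ltnW.
rewrite (inner_translate_grid (ltnW hk)).
rewrite (eq_bigr _ (fun (l : 'I_Pn) _ => norm_fourier_chi l k)) -mulr_sumr exchange_big /=.
rewrite (eq_bigr (fun j : 'I_Pn => Pn%:R * (c j * (c ((j + k) %% Pn))^*))); last first.
  move=> j _; rewrite exchange_big /=.
  (* the character sum over l vanishes unless j' = j + k mod p^(M+N) *)
  rewrite (eq_bigr (fun j' : 'I_Pn => (c j * (c j')^*) *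
     (if (j' : nat) == ((j + k) %% Pn)%N then Pn%:R else 0))); last first.
    by move=> j' _; rewrite -mulr_sumr sum_cexp2pi_frac // dvdz_shift_mod.
  rewrite (bigD1 (Ordinal (ltn_pmod (j + k) Pn_gt0))) //= eqxx big1 ?addr0.
    by rewrite mulrC.
  move=> j' /eqP hj'; rewrite ifF ?mulr0 //; apply/eqP => e.
  by apply: hj'; apply: val_inj.
rewrite -mulr_sumr mulrA [RHS]mulrA; congr (_ * _).
rewrite expr2 -mulrA [pM * _]mulrC expnD natrM natrX mulrA -exprMn.
by rewrite mulVf ?pC_neq0 // expr1n mul1r.
Qed.

End TestFunction.

Theorem theorem7 (p : nat) (M N : nat) (phi : Qp p -> C) :
  prime p -> DNM N M phi -> orthonormal_translates phi ->
  forall k : nat, (k < p ^ N)%N ->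
    \sum_(l < (p ^ (M + N))%N)
       `|fourier phi (mulQp (natQp p l) (pinvQp p M))| ^+ 2
         * chi (mulQp (natQp p (l * k)) (pinvQp p (M + N)))
    = (p ^ N)%:R * (k == 0%N)%:R.
Proof.
move=> /prime_gt1 p_gt1 phi_DNM phi_ON k hk.
have hkMN : (k < p ^ (M + N))%N.
  by rewrite (leq_trans hk) // leq_pexp2l ?leq_addl // ltnW.
rewrite (sum_norm_fourier_chi p_gt1 phi_DNM hkMN).
have pN_gt0 : (0 < p ^ N)%N by rewrite expn_gt0 ltnW.
have [inner_eq inner_neq] := phi_ON _ _ (Ip_grid p_gt1 hk) (Ip_grid p_gt1 pN_gt0).
have [k0 | k_neq0] := eqVneq k 0%N.
  by subst k; rewrite (inner_eq erefl) /= mulr1n.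
rewrite inner_neq; first by rewrite /= mulr0n.
by move=> /(grid_eq0 p_gt1 hk) k0; rewrite k0 eqxx in k_neq0.
Qed.
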